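(* Let $A\subseteq2^{\mathbb N}$ be analytic and non-Borel. Let $\phi$ be any $\mathbf\Pi^1_1$-rank on $\mathcal L^A_{\mathbf f}$ and $\psi$ any $\mathbf\Pi^1_1$-rank on $\mathcal L^A_{\mathbf f,0}$. Then there is no map $\Phi:\omega_1\to\omega_1$ such that $\psi(L)\le\Phi(\phi(L))$ for all $L\in\mathcal L^A_{\mathbf f,0}$.
   Context: Fix a bijection $h:2^{<\mathbb N}\to\mathbb N$ with $h(s)<h(t)$ whenever $|s|<|t|$ and let $s_n=h^{-1}(n)$. For $s\in2^{<\mathbb N}$ let $V_s=\{\sigma\in2^{\mathbb N}:s\sqsubset\sigma\}$, and let $f_n=\chi_{V_{s_n}}$. $[\mathbb N]$ is the set of infinite subsets of $\mathbb N$ (Polish subspace of $2^{\mathbb N}$). Define $\mathcal L^A_{\mathbf f}=\{L\in[\mathbb N]:(f_n|_A)_{n\in L}\text{ converges pointwise on }A\}$ and $\mathcal L^A_{\mathbf f,0}=\{L\in[\mathbb N]:(f_n|_A)_{n\in L}\text{ converges pointwise to }0\text{ on }A\}$; both are $\mathbf\Pi^1_1$. For a $\mathbf\Pi^1_1$ set $B$ in a Polish space, $\phi:B\to\omega_1$ is a $\mathbf\Pi^1_1$-rank if there are relations $\le_\Sigma\in\mathbf\Sigma^1_1$, $\le_\Pi\in\mathbf\Pi^1_1$ such that for all $y\in B$ and all $x$: $(x\in B\wedge\phi(x)\le\phi(y))\iff x\le_\Sigma y\iff x\le_\Pi y$. *)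

From Stdlib Require Import Reals List Arith.
Open Scope R_scope.

Definition cantor := nat -> bool.
Definition baire := nat -> nat.

Definition agree {X : Type} (n : nat) (x y : nat -> X) : Prop :=
  forall k, (k < n)%nat -> x k = y k.

Definition open_set (U : cantor -> Prop) : Prop :=
  forall x, U x -> exists n, forall y, agree n x y -> U y.

Inductive borel : (cantor -> Prop) -> Prop :=
| borel_open : forall U, open_set U -> borel U
| borel_compl : forall B, borel B -> borel (fun x => ~ B x)
| borel_cunion : forall B : nat -> cantor -> Prop,
    (forall n, borel (B n)) -> borel (fun x => exists n, B n x).

Definition is_borel (A : cantor -> Prop) : Prop :=
  exists B, borel B /\ forall x, A x <-> B x.

Definition closed2 (C : cantor -> baire -> Prop) : Prop :=
  forall x z, ~ C x z -> exists n, forall x' z',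
    agree n x x' -> agree n z z' -> ~ C x' z'.

Definition closed3 (C : cantor -> cantor -> baire -> Prop) : Prop :=
  forall x y z, ~ C x y z -> exists n, forall x' y' z',
    agree n x x' -> agree n y y' -> agree n z z' -> ~ C x' y' z'.

Definition analytic (A : cantor -> Prop) : Prop :=
  exists C, closed2 C /\ forall x, A x <-> exists z, C x z.

Definition sigma11_rel (R : cantor -> cantor -> Prop) : Prop :=
  exists C, closed3 C /\ forall x y, R x y <-> exists z, C x y z.

Definition pi11_rel (R : cantor -> cantor -> Prop) : Prop :=
  exists C, closed3 C /\ forall x y, R x y <-> ~ exists z, C x y z.

(** [N]: infinite subsets of N, as characteristic functions. *)
Definition infset (L : cantor) : Prop := forall m, exists n, (m <= n)%nat /\ L n = true.

(** Finite binary sequences 2^{<N} = list bool; s ⊏ sigma iff s is the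
    initial segment of sigma of length |s|. *)
Definition init_seg (sigma : cantor) (n : nat) : list bool := map sigma (seq 0 n).

Definition admissible_enum (h : list bool -> nat) (s : nat -> list bool) : Prop :=
  (forall n, h (s n) = n) /\ (forall t, s (h t) = t) /\
  (forall t u, (length t < length u)%nat -> (h t < h u)%nat).

(** f_n = characteristic function of V_{s_n} (real valued). *)
Definition fseq (s : nat -> list bool) (n : nat) (sigma : cantor) : R :=
  if list_eq_dec Bool.bool_dec (s n) (init_seg sigma (length (s n))) then 1 else 0.

(** (f_n|_A)_{n in L} converges pointwise on A (to l_sigma), i.e. for each sigma in A
    the subsequence (f_n(sigma))_{n in L} converges. *)
Definition subseq_conv_to (L : cantor) (u : nat -> R) (l : R) : Prop :=
  forall eps, eps > 0 -> exists N, forall n, (N <= n)%nat -> L n = true ->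
    Rabs (u n - l) < eps.

Definition Lf (s : nat -> list bool) (A : cantor -> Prop) (L : cantor) : Prop :=
  infset L /\ forall sigma, A sigma -> exists l, subseq_conv_to L (fun n => fseq s n sigma) l.

Definition Lf0 (s : nat -> list bool) (A : cantor -> Prop) (L : cantor) : Prop :=
  infset L /\ forall sigma, A sigma -> subseq_conv_to L (fun n => fseq s n sigma) 0.

(** omega_1, characterised up to isomorphism: a strict well-order (O, lt) which is
    total, uncountable, and all of whose proper initial segments are countable. *)
Definition is_omega1 (O : Type) (lt : O -> O -> Prop) : Prop :=
  (forall a, ~ lt a a) /\
  (forall a b c, lt a b -> lt b c -> lt a c) /\
  (forall a b, lt a b \/ a = b \/ lt b a) /\
  well_founded lt /\
  (~ exists f : nat -> O, forall b, exists n, f n = b) /\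
  (forall a, exists f : nat -> O, forall b, lt b a -> exists n, f n = b).

Definition ole {O : Type} (lt : O -> O -> Prop) (a b : O) : Prop := lt a b \/ a = b.

(** phi : B -> omega_1 is a Pi^1_1-rank on B ⊆ [N] (only values on B matter). *)
Definition pi11_rank {O : Type} (lt : O -> O -> Prop) (B : cantor -> Prop)
    (phi : cantor -> O) : Prop :=
  (forall x, B x -> infset x) /\
  exists leS leP : cantor -> cantor -> Prop,
    sigma11_rel leS /\ pi11_rel leP /\
    forall y, B y -> forall x, infset x ->
      ((B x /\ ole lt (phi x) (phi y)) <-> leS x y) /\ (leS x y <-> leP x y).

(** The proof reduces the complement of
    [A], which is not analytic by Souslin's theorem, to both sets of
    convergence by two continuous maps of [2^N] into [[N]]:
    - the branch [{n | s_n ⊏ sg}] lies in [L^A_f] for every [sg], and lies in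
      [L^A_{f,0}] iff [sg ∉ A];
    - the fan [{n | parent of s_n ⊏ sg}] lies in [L^A_f] iff [sg ∉ A].
    Two boundedness principles for a [Pi^1_1]-rank on a set [B] to which a
    non-analytic set reduces continuously then finish the proof: the rank
    is bounded on every continuous family in [B], and it is unbounded on the
    reduced points.  Hence [phi] is bounded on all branches by some [a0], so
    [Phi] would bound [psi] on the branches of points outside [A] by a bound
    of [Phi] on the countable segment below [a0], which is impossible. *)

From Stdlib Require Import Reals List Arith Lia Lra Classical ClassicalEpsilon
  FunctionalExtensionality Cantor.
Import ListNotations.

Lemma agree_weaken {X : Type} m n (x y : nat -> X) :
  (m <= n)%nat -> agree n x y -> agree m x y.
Proof. intros Hmn Hn k Hk. apply Hn. lia. Qed.

Definition separable (P Q : cantor -> Prop) : Prop :=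
  exists D, borel D /\ (forall x, P x -> D x) /\ (forall x, Q x -> ~ D x).

Lemma separable_mono (P Q P' Q' : cantor -> Prop) :
  separable P Q -> (forall x, P' x -> P x) -> (forall x, Q' x -> Q x) ->
  separable P' Q'.
Proof. intros [D [HD [HP HQ]]] HP' HQ'. exists D. auto. Qed.

Lemma separable_empty_l (P Q : cantor -> Prop) : (forall x, ~ P x) -> separable P Q.
Proof.
  intros HP. exists (fun _ => False). split; [|firstorder].
  apply borel_open. intros x [].
Qed.

Lemma separable_empty_r (P Q : cantor -> Prop) : (forall x, ~ Q x) -> separable P Q.
Proof.
  intros HQ. exists (fun _ => True). split; [|firstorder].
  apply borel_open. intros x _. exists 0%nat. auto.
Qed.

Lemma separable_union_l (P : nat -> cantor -> Prop) (Q : cantor -> Prop) :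
  (forall n, separable (P n) Q) -> separable (fun x => exists n, P n x) Q.
Proof.
  intros H. destruct (choice _ H) as [D HD].
  exists (fun x => exists n, D n x). split; [|split].
  - apply borel_cunion. intro n. apply HD.
  - intros x [n Hn]. exists n. apply HD, Hn.
  - intros x Hx [n Hn]. exact (proj2 (proj2 (HD n)) x Hx Hn).
Qed.

Lemma separable_union_r (P : cantor -> Prop) (Q : nat -> cantor -> Prop) :
  (forall n, separable P (Q n)) -> separable P (fun x => exists n, Q n x).
Proof.
  intros H. destruct (choice _ H) as [D HD].
  exists (fun x => ~ exists n, ~ D n x). split; [|split].
  - apply borel_compl, (borel_cunion (fun n x => ~ D n x)).
    intro n. apply borel_compl, HD.
  - intros x Hx [n Hn]. apply Hn, HD, Hx.
  - intros x [n Hn] HD'. apply HD'. exists n. exact (proj2 (proj2 (HD n)) x Hn).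
Qed.

(** Fusion: if a property [G k] of sequences only asks for one more term to
    be fixed at each level, a sequence can be refined forever; the terms fixed
    along the way form a limit sequence approximated at every level. *)
Lemma fusion {Y : Type} (G : nat -> (nat -> Y) -> Prop) (c0 : nat -> Y) :
  G 0%nat c0 ->
  (forall k c, G k c -> exists c', agree k c c' /\ G (S k) c') ->
  exists c, forall k, exists ck, G k ck /\ agree k ck c.
Proof.
  intros H0 Hstep.
  assert (Hnext : forall kc : nat * (nat -> Y), exists c',
             G (fst kc) (snd kc) -> agree (fst kc) (snd kc) c' /\ G (S (fst kc)) c').
  { intros [k c]. destruct (classic (G k c)) as [Hg|Hg].
    - destruct (Hstep k c Hg) as [c' Hc']. exists c'. auto.
    - exists c. intro. contradiction. }
  destruct (choice _ Hnext) as [next Hnext'].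
  set (approx := fix approx k := match k with 0 => c0 | S k => next (k, approx k) end).
  assert (Hgood : forall k, G k (approx k)).
  { induction k as [|k IH]; [exact H0|]. exact (proj2 (Hnext' (k, approx k) IH)). }
  exists (fun i => approx (S i) i). intro k. exists (approx k). split; [apply Hgood|].
  induction k as [|k IH]; intros i Hi; [lia|].
  destruct (Nat.eq_dec i k) as [->|Hik]; [reflexivity|].
  assert (Hstable : approx (S k) i = approx k i).
  { symmetry. apply (proj1 (Hnext' (k, approx k) (Hgood k))). simpl. lia. }
  rewrite Hstable. apply IH. lia.
Qed.

(** Codes [n] of pairs (bit, number), used to index the one-step refinements
    of a piece of an analytic set by natural numbers. *)
Definition bit_of (n : nat) : bool := negb (Nat.eqb (fst (Cantor.of_nat n)) 0).
Definition num_of (n : nat) : nat := snd (Cantor.of_nat n).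
Definition code (b : bool) (m : nat) : nat := Cantor.to_nat (Nat.b2n b, m).

Lemma bit_of_code b m : bit_of (code b m) = b.
Proof. unfold bit_of, code. rewrite Cantor.cancel_of_to. destruct b; reflexivity. Qed.

Lemma num_of_code b m : num_of (code b m) = m.
Proof. unfold num_of, code. rewrite Cantor.cancel_of_to. reflexivity. Qed.

Section Pieces.
Variable C : cantor -> baire -> Prop.

Definition piece (k : nat) (c : baire) (x : cantor) : Prop :=
  exists z, C x z /\ forall i, (i < k)%nat -> x i = bit_of (c i) /\ z i = num_of (c i).

Lemma piece_0 c x : piece 0 c x <-> exists z, C x z.
Proof. split; intros [z Hz]; exists z; [apply Hz|split; [exact Hz|lia]]. Qed.

Lemma piece_agree k c c' x : agree k c c' -> piece k c x -> piece k c' x.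
Proof. intros Hc [z [Hz Hx]]. exists z. split; [exact Hz|]. intros i Hi. rewrite <- Hc; auto. Qed.

Lemma piece_refine k c x : piece k c x ->
  exists n, forall c', agree k c c' -> c' k = n -> piece (S k) c' x.
Proof.
  intros [z [Hz Hx]]. exists (code (x k) (z k)). intros c' Hc' Hk.
  exists z. split; [exact Hz|]. intros i Hi.
  destruct (Nat.eq_dec i k) as [->|Hik].
  - rewrite Hk, bit_of_code, num_of_code. auto.
  - rewrite <- Hc' by lia. apply Hx. lia.
Qed.

Lemma piece_limit c : closed2 C -> (forall k, exists x, piece k c x) ->
  C (fun i => bit_of (c i)) (fun i => num_of (c i)).
Proof.
  intros Hcl Hne. apply NNPP. intro Hout.
  destruct (Hcl _ _ Hout) as [n Hn]. destruct (Hne n) as [x [z [Hz Hx]]].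
  apply (Hn x z); [| |exact Hz]; intros i Hi; symmetry; apply Hx, Hi.
Qed.
End Pieces.

Section Separation.
Variables C1 C2 : cantor -> baire -> Prop.

Definition inseparable_at (k : nat) (c : nat -> nat * nat) : Prop :=
  ~ separable (piece C1 k (fun i => fst (c i))) (piece C2 k (fun i => snd (c i))).

Lemma inseparable_agree k c c' : agree k c c' -> inseparable_at k c -> inseparable_at k c'.
Proof.
  intros Hc Hins Hsep. apply Hins. eapply separable_mono; [exact Hsep| |];
    intro x; apply piece_agree; intros i Hi; rewrite (Hc i Hi); reflexivity.
Qed.

Lemma inseparable_refine k c : inseparable_at k c ->
  exists c', agree k c c' /\ inseparable_at (S k) c'.
Proof.
  intros Hins. apply NNPP. intro Hall. apply Hins.
  set (ext := fun n1 n2 i => if Nat.eqb i k then (n1, n2) else c i).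
  assert (Hext : forall n1 n2, agree k c (ext n1 n2)).
  { intros n1 n2 i Hi. unfold ext. rewrite (proj2 (Nat.eqb_neq i k)) by lia. reflexivity. }
  assert (Hsep : forall n1 n2, separable (piece C1 (S k) (fun i => fst (ext n1 0%nat i)))
                                         (piece C2 (S k) (fun i => snd (ext 0%nat n2 i)))).
  { intros n1 n2. apply NNPP. intro Hn. apply Hall. exists (ext n1 n2).
    split; [apply Hext|]. intro Hs. apply Hn.
    eapply separable_mono; [exact Hs| |]; intro x; apply piece_agree;
      intros i _; unfold ext; destruct (Nat.eqb i k); reflexivity. }
  apply (separable_mono (fun x => exists n1, piece C1 (S k) (fun i => fst (ext n1 0%nat i)) x)
                        (fun x => exists n2, piece C2 (S k) (fun i => snd (ext 0%nat n2 i)) x)).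
  - apply separable_union_l. intro n1. apply separable_union_r. intro n2. apply Hsep.
  - intros x Hx. destruct (piece_refine _ _ _ _ Hx) as [n1 Hn1]. exists n1.
    apply Hn1; [|unfold ext; rewrite Nat.eqb_refl; reflexivity].
    intros i Hi. rewrite (Hext n1 0%nat i Hi). reflexivity.
  - intros x Hx. destruct (piece_refine _ _ _ _ Hx) as [n2 Hn2]. exists n2.
    apply Hn2; [|unfold ext; rewrite Nat.eqb_refl; reflexivity].
    intros i Hi. rewrite (Hext 0%nat n2 i Hi). reflexivity.
Qed.

(** Otherwise fusion yields coded limits [x1 ∈ proj C1], [x2 ∈ proj C2]; they
    differ (disjointness), and a clopen set then separates the pieces at the
    first level where they differ. *)
Theorem lusin_separation : closed2 C1 -> closed2 C2 ->
  (forall x z1 z2, C1 x z1 -> C2 x z2 -> False) ->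
  separable (fun x => exists z, C1 x z) (fun x => exists z, C2 x z).
Proof.
  intros Hcl1 Hcl2 Hdisj. apply NNPP. intro Hns.
  assert (Hstart : inseparable_at 0 (fun _ => (0, 0)%nat)).
  { intro Hs. apply Hns. eapply separable_mono; [exact Hs| |]; intro x; apply piece_0. }
  destruct (fusion inseparable_at _ Hstart inseparable_refine) as [c Hc].
  assert (Hins : forall k, inseparable_at k c).
  { intro k. destruct (Hc k) as [ck [Hk Hag]]. exact (inseparable_agree _ _ _ Hag Hk). }
  set (x1 := fun i => bit_of (fst (c i))). set (x2 := fun i => bit_of (snd (c i))).
  assert (HC1 : C1 x1 (fun i => num_of (fst (c i)))).
  { apply piece_limit; [exact Hcl1|]. intro k. apply NNPP. intro Hemp.
    apply (Hins k), separable_empty_l. intros x Hx. apply Hemp. exists x. exact Hx. }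
  assert (HC2 : C2 x2 (fun i => num_of (snd (c i)))).
  { apply piece_limit; [exact Hcl2|]. intro k. apply NNPP. intro Hemp.
    apply (Hins k), separable_empty_r. intros x Hx. apply Hemp. exists x. exact Hx. }
  destruct (classic (forall i, x1 i = x2 i)) as [Heq|Hne].
  - apply (Hdisj x1 _ (fun i => num_of (snd (c i))) HC1). replace x1 with x2; [exact HC2|].
    apply functional_extensionality. intro i. symmetry. apply Heq.
  - apply not_all_ex_not in Hne. destruct Hne as [i Hi].
    apply (Hins (S i)). exists (fun x => x i = x1 i). split; [|split].
    + apply borel_open. intros x Hx. exists (S i). intros y Hy. rewrite <- Hy by lia. exact Hx.
    + intros x [z [_ Hx]]. apply (Hx i). lia.
    + intros x [z [_ Hx]] Hxi. apply Hi. rewrite <- Hxi. apply (Hx i). lia.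
Qed.
End Separation.

Theorem souslin (A : cantor -> Prop) :
  analytic A -> analytic (fun x => ~ A x) -> is_borel A.
Proof.
  intros [C1 [Hcl1 H1]] [C2 [Hcl2 H2]].
  destruct (lusin_separation C1 C2 Hcl1 Hcl2) as [D [HD [HA HnA]]].
  - intros x z1 z2 Hz1 Hz2. apply (proj2 (H2 x)); [exists z2; exact Hz2|].
    apply H1. exists z1. exact Hz1.
  - exists D. split; [exact HD|]. intro x. split.
    + intro Hx. apply HA, H1, Hx.
    + intro Hx. apply NNPP. intro Hn. apply (HnA x); [apply H2, Hn|exact Hx].
Qed.

(** A map between sequence spaces is nonexpansive when the first [n] terms of
    the image only depend on the first [n] terms of the argument; all maps
    used below are of this kind, in particular continuous. *)
Definition nonexpansive {X Y : Type} (F : (nat -> X) -> (nat -> Y)) : Prop :=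
  forall n x x', agree n x x' -> agree n (F x) (F x').

Lemma analytic_ext (P Q : cantor -> Prop) :
  analytic P -> (forall x, P x <-> Q x) -> analytic Q.
Proof. intros [C [Hcl HC]] HPQ. exists C. split; [exact Hcl|]. intro x. rewrite <- HPQ. apply HC. Qed.

Lemma analytic_empty : analytic (fun _ => False).
Proof.
  exists (fun _ _ => False). split.
  - intros x z _. exists 0%nat. auto.
  - intro x. split; [intros []|intros [z []]].
Qed.

Definition seq_fst (z : baire) : baire := fun k => fst (Cantor.of_nat (z k)).
Definition seq_snd (z : baire) : baire := fun k => snd (Cantor.of_nat (z k)).
Definition seq_pair (w v : baire) : baire := fun k => Cantor.to_nat (w k, v k).

Lemma seq_fst_pair w v : seq_fst (seq_pair w v) = w.
Proof. apply functional_extensionality. intro k. unfold seq_fst, seq_pair. rewrite Cantor.cancel_of_to. reflexivity. Qed.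

Lemma seq_snd_pair w v : seq_snd (seq_pair w v) = v.
Proof. apply functional_extensionality. intro k. unfold seq_snd, seq_pair. rewrite Cantor.cancel_of_to. reflexivity. Qed.

Lemma analytic_sigma11_preimage (R : cantor -> cantor -> Prop)
    (F : cantor -> cantor) (G : baire -> cantor) :
  sigma11_rel R -> nonexpansive F -> nonexpansive G ->
  analytic (fun x => exists w, R (F x) (G w)).
Proof.
  intros [C [Hcl HR]] HF HG.
  exists (fun x z => C (F x) (G (seq_fst z)) (seq_snd z)). split.
  - intros x z Hout. destruct (Hcl _ _ _ Hout) as [n Hn]. exists n.
    intros x' z' Hx Hz. apply Hn; [apply HF, Hx|apply HG|];
      intros k Hk; unfold seq_fst, seq_snd; rewrite (Hz k Hk); reflexivity.
  - intro x. split.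
    + intros [w Hw]. apply HR in Hw. destruct Hw as [v Hv].
      exists (seq_pair w v). rewrite seq_fst_pair, seq_snd_pair. exact Hv.
    + intros [z Hz]. exists (seq_fst z). apply HR. exists (seq_snd z). exact Hz.
Qed.

Lemma init_seg_length sg L : length (init_seg sg L) = L.
Proof. unfold init_seg. rewrite length_map, length_seq. reflexivity. Qed.

Lemma init_seg_S sg L : init_seg sg (S L) = init_seg sg L ++ [sg L].
Proof. unfold init_seg. rewrite seq_S, map_app. reflexivity. Qed.

Lemma init_seg_agree sg tau L : agree L sg tau -> init_seg sg L = init_seg tau L.
Proof.
  intros H. unfold init_seg. apply map_ext_in. intros i Hi. apply in_seq in Hi. apply H. lia.
Qed.

Lemma init_seg_nth sg L i : (i < L)%nat -> nth i (init_seg sg L) false = sg i.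
Proof.
  intros Hi. unfold init_seg.
  rewrite nth_indep with (d' := sg 0%nat) by (rewrite length_map, length_seq; exact Hi).
  rewrite map_nth, seq_nth by exact Hi. reflexivity.
Qed.

Lemma init_seg_inj sg tau L : init_seg sg L = init_seg tau L -> agree L sg tau.
Proof. intros H i Hi. rewrite <- (init_seg_nth sg L i Hi), H. apply init_seg_nth, Hi. Qed.

Definition prefixb (t : list bool) (sg : cantor) : bool :=
  if list_eq_dec Bool.bool_dec t (init_seg sg (length t)) then true else false.

Lemma prefixb_spec t sg : prefixb t sg = true <-> t = init_seg sg (length t).
Proof. unfold prefixb. destruct (list_eq_dec _ _ _); split; congruence. Qed.

Lemma fseq_prefixb s n sg : fseq s n sg = if prefixb (s n) sg then 1 else 0.
Proof. unfold fseq, prefixb. destruct (list_eq_dec _ _ _); reflexivity. Qed.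

Lemma prefixb_init sg m : prefixb (init_seg sg m) sg = true.
Proof. apply prefixb_spec. rewrite init_seg_length. reflexivity. Qed.

Lemma prefixb_agree t sg sg' : agree (length t) sg sg' -> prefixb t sg = prefixb t sg'.
Proof. intro H. unfold prefixb. rewrite (init_seg_agree _ _ _ H). reflexivity. Qed.

Lemma removelast_init_seg sg L : removelast (init_seg sg L) = init_seg sg (pred L).
Proof. destruct L as [|L]; [reflexivity|]. rewrite init_seg_S, removelast_last. reflexivity. Qed.

Lemma length_removelast {X : Type} (t : list X) : length (removelast t) = pred (length t).
Proof. rewrite removelast_firstn_len, length_firstn. lia. Qed.

Lemma prefixb_removelast t sg : prefixb t sg = true -> prefixb (removelast t) sg = true.
Proof. intros Ht. apply prefixb_spec in Ht. rewrite Ht, removelast_init_seg. apply prefixb_init. Qed.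

Lemma prefixb_common t sg tau d : sg d <> tau d ->
  prefixb t sg = true -> prefixb t tau = true -> (length t <= d)%nat.
Proof.
  intros Hd Hsg Htau. apply prefixb_spec in Hsg, Htau.
  destruct (le_lt_dec (length t) d) as [Hle|Hlt]; [exact Hle|].
  exfalso. apply Hd. apply (init_seg_inj sg tau (length t)); [congruence|exact Hlt].
Qed.

Definition off_node (sg : cantor) (m : nat) : list bool := init_seg sg m ++ [negb (sg m)].

Lemma off_node_parent sg m : removelast (off_node sg m) = init_seg sg m.
Proof. apply removelast_last. Qed.

Lemma off_node_not_prefix sg m : prefixb (off_node sg m) sg = false.
Proof.
  apply Bool.not_true_iff_false. intro H. apply prefixb_spec in H.
  unfold off_node in H. rewrite length_app, init_seg_length, Nat.add_1_r, init_seg_S in H.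
  apply app_inj_tail in H. destruct (sg m); discriminate (proj2 H).
Qed.

Lemma off_node_length sg m : length (off_node sg m) = S m.
Proof. unfold off_node. rewrite length_app, init_seg_length. simpl. lia. Qed.

Definition cofinal (L : cantor) (P : nat -> Prop) : Prop :=
  forall N, exists n, (N <= n)%nat /\ L n = true /\ P n.

Lemma conv_eventually_const (L : cantor) (u : nat -> R) l :
  (exists N, forall n, (N <= n)%nat -> L n = true -> u n = l) -> subseq_conv_to L u l.
Proof.
  intros [N HN] eps Heps. exists N. intros n Hn HL.
  rewrite (HN n Hn HL), Rminus_diag, Rabs_R0. exact Heps.
Qed.

Lemma conv_cofinal_value (L : cantor) (u : nat -> R) l a :
  subseq_conv_to L u l -> cofinal L (fun n => u n = a) -> a = l.
Proof.
  intros Hconv Hcof. destruct (Req_dec a l) as [Heq|Hne]; [exact Heq|].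
  assert (Hpos : Rabs (a - l) > 0) by (apply Rabs_pos_lt; lra).
  destruct (Hconv _ Hpos) as [N HN]. destruct (Hcof N) as [n [Hn [HL Hu]]].
  specialize (HN n Hn HL). rewrite Hu in HN. lra.
Qed.

Lemma conv_subset (L L' : cantor) (u : nat -> R) l :
  (forall n, L' n = true -> L n = true) -> subseq_conv_to L u l -> subseq_conv_to L' u l.
Proof.
  intros Hsub Hconv eps Heps. destruct (Hconv eps Heps) as [N HN].
  exists N. intros n Hn HL'. apply HN; auto.
Qed.

Section Enumeration.
Variables (h : list bool -> nat) (s : nat -> list bool).
Hypothesis Hadm : admissible_enum h s.

(** [h] lists nodes by nondecreasing length, so [h t >= |t|] and [|s_n| <= n]. *)
Lemma h_length t : (length t <= h t)%nat.
Proof.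
  destruct Hadm as [_ [_ Hmono]].
  enough (H : forall m t, length t = m -> (m <= h t)%nat) by (apply H; reflexivity).
  induction m as [|m IH]; intros u Hu; [lia|].
  specialize (IH (repeat false m) (repeat_length _ _)).
  assert (Hlt := Hmono (repeat false m) u). rewrite repeat_length in Hlt. lia.
Qed.

Lemma s_length n : (length (s n) <= n)%nat.
Proof. destruct Hadm as [Hhs _]. rewrite <- (Hhs n) at 2. apply h_length. Qed.

Lemma s_eventually_long d : exists N, forall n, (N <= n)%nat -> (d < length (s n))%nat.
Proof.
  destruct Hadm as [Hhs [_ Hmono]]. exists (h (repeat false (S d))). intros n Hn.
  destruct (le_lt_dec (length (s n)) d) as [Hle|Hlt]; [|exact Hlt].
  assert (Hh := Hmono (s n) (repeat false (S d))). rewrite repeat_length, Hhs in Hh. lia.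
Qed.

(** The branch [{n | s_n ⊏ sg}] and the fan [{n | parent of s_n ⊏ sg}] of
    [sg]: the branch together with the nodes branching off it. *)
Definition branch (sg : cantor) : cantor := fun n => prefixb (s n) sg.
Definition fan (sg : cantor) : cantor := fun n => prefixb (removelast (s n)) sg.

Lemma branch_nonexpansive : nonexpansive branch.
Proof.
  intros n sg sg' Hag k Hk. apply prefixb_agree.
  apply (agree_weaken _ n); [pose proof (s_length k); lia|exact Hag].
Qed.

Lemma fan_nonexpansive : nonexpansive fan.
Proof.
  intros n sg sg' Hag k Hk. apply prefixb_agree. apply (agree_weaken _ n); [|exact Hag].
  rewrite length_removelast. pose proof (s_length k). lia.
Qed.

Lemma branch_sub_fan sg n : branch sg n = true -> fan sg n = true.
Proof. apply prefixb_removelast. Qed.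

Lemma branch_at_init sg m : branch sg (h (init_seg sg m)) = true.
Proof. unfold branch. rewrite (proj1 (proj2 Hadm)). apply prefixb_init. Qed.

Lemma fan_at_off_node sg m : fan sg (h (off_node sg m)) = true.
Proof. unfold fan. rewrite (proj1 (proj2 Hadm)), off_node_parent. apply prefixb_init. Qed.

Lemma contains_branch_infset (L : cantor) sg :
  (forall m, L (h (init_seg sg m)) = true) -> infset L.
Proof.
  intros HL m. exists (h (init_seg sg m)). split; [|apply HL].
  pose proof (h_length (init_seg sg m)) as H. rewrite init_seg_length in H. exact H.
Qed.

Lemma contains_branch_cofinal (L : cantor) sg :
  (forall m, L (h (init_seg sg m)) = true) -> cofinal L (fun n => fseq s n sg = 1).
Proof.
  intros HL N. exists (h (init_seg sg N)). split; [|split; [apply HL|]].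
  - pose proof (h_length (init_seg sg N)) as H. rewrite init_seg_length in H. exact H.
  - rewrite fseq_prefixb. fold (branch sg (h (init_seg sg N))). rewrite branch_at_init. reflexivity.
Qed.

Lemma branch_infset sg : infset (branch sg).
Proof. apply (contains_branch_infset _ sg), branch_at_init. Qed.

Lemma fan_infset sg : infset (fan sg).
Proof. apply (contains_branch_infset _ sg). intro m. apply branch_sub_fan, branch_at_init. Qed.

(** Along the fan of [sg], [f_n(sg) = 0] cofinally (at the off-branch nodes). *)
Lemma fan_cofinal_zero sg : cofinal (fan sg) (fun n => fseq s n sg = 0).
Proof.
  intros N. exists (h (off_node sg N)). split; [|split; [apply fan_at_off_node|]].
  - pose proof (h_length (off_node sg N)) as H. rewrite off_node_length in H. lia.
  - rewrite fseq_prefixb, (proj1 (proj2 Hadm)), off_node_not_prefix. reflexivity.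
Qed.

Lemma fan_conv_zero sg tau : sg <> tau -> subseq_conv_to (fan sg) (fun n => fseq s n tau) 0.
Proof.
  intros Hne. destruct (not_all_ex_not _ _ (fun H => Hne (functional_extensionality _ _ H)))
    as [d Hd].
  destruct (s_eventually_long (S d)) as [N HN].
  apply conv_eventually_const. exists N. intros n Hn Hfan.
  rewrite fseq_prefixb. destruct (prefixb (s n) tau) eqn:Htau; [|reflexivity].
  exfalso. specialize (HN n Hn).
  assert (Hshort := prefixb_common _ _ _ _ Hd Hfan (prefixb_removelast _ _ Htau)).
  rewrite length_removelast in Hshort. lia.
Qed.

Lemma branch_conv_one sg : subseq_conv_to (branch sg) (fun n => fseq s n sg) 1.
Proof.
  apply conv_eventually_const. exists 0%nat. intros n _ Hn.
  rewrite fseq_prefixb. unfold branch in Hn. rewrite Hn. reflexivity.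
Qed.

Lemma branch_in_Lf (A : cantor -> Prop) sg : Lf s A (branch sg).
Proof.
  split; [apply branch_infset|]. intros tau _.
  destruct (classic (sg = tau)) as [<-|Hne].
  - exists 1. apply branch_conv_one.
  - exists 0. exact (conv_subset _ _ _ _ (branch_sub_fan sg) (fan_conv_zero sg tau Hne)).
Qed.

Lemma branch_in_Lf0 (A : cantor -> Prop) sg : Lf0 s A (branch sg) <-> ~ A sg.
Proof.
  split.
  - intros [_ Hconv] Hsg. apply R1_neq_R0.
    apply (conv_cofinal_value _ _ _ _ (Hconv sg Hsg)), contains_branch_cofinal, branch_at_init.
  - intros Hsg. split; [apply branch_infset|]. intros tau Htau.
    apply (conv_subset _ _ _ _ (branch_sub_fan sg)), fan_conv_zero. congruence.
Qed.

Lemma fan_in_Lf (A : cantor -> Prop) sg : Lf s A (fan sg) <-> ~ A sg.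
Proof.
  split.
  - intros [_ Hconv] Hsg. destruct (Hconv sg Hsg) as [l Hl]. apply R1_neq_R0.
    assert (Hbr : forall m, fan sg (h (init_seg sg m)) = true)
      by (intro m; apply branch_sub_fan, branch_at_init).
    rewrite (conv_cofinal_value _ _ _ _ Hl (contains_branch_cofinal _ _ Hbr)).
    symmetry. exact (conv_cofinal_value _ _ _ _ Hl (fan_cofinal_zero sg)).
  - intros Hsg. split; [apply fan_infset|]. intros tau Htau.
    exists 0. apply fan_conv_zero. congruence.
Qed.
End Enumeration.

Section Omega1.
Variables (O : Type) (lt : O -> O -> Prop).
Hypothesis Hw : is_omega1 O lt.

Lemma lt_of_not_ole a b : ~ ole lt a b -> lt b a.
Proof.
  intro H. destruct Hw as [_ [_ [Htot _]]].
  destruct (Htot a b) as [Hab|[Hab|Hba]]; [| |exact Hba]; exfalso; apply H; unfold ole; auto.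
Qed.

Lemma ole_trans a b c : ole lt a b -> ole lt b c -> ole lt a c.
Proof. destruct Hw as [_ [Htrans _]]. unfold ole. intros [H1| ->] [H2| ->]; eauto. Qed.

Lemma unbounded_exceeds {X : Type} (F : X -> O) :
  ~ (exists a, forall x, ole lt (F x) a) -> forall a, exists x, lt a (F x).
Proof.
  intros Hunb a. apply NNPP. intro Hno. apply Hunb. exists a. intro x.
  apply NNPP. intro Hx. apply Hno. exists x. apply lt_of_not_ole, Hx.
Qed.

Lemma initial_segment_countable a :
  exists e : nat -> O, forall b, ole lt b a -> exists n, e n = b.
Proof.
  destruct Hw as [_ [_ [_ [_ [_ Hcount]]]]]. destruct (Hcount a) as [f Hf].
  exists (fun n => match n with 0 => a | S n => f n end).
  intros b [Hb| ->]; [destruct (Hf b Hb) as [n Hn]; exists (S n)|exists 0%nat]; auto.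
Qed.

(** Countable sets of countable ordinals are bounded, as [omega_1] is not a
    countable union of countable initial segments. *)
Lemma countable_bounded (c : nat -> O) : exists g, forall n, ole lt (c n) g.
Proof.
  apply NNPP. intro Hunb. pose proof (unbounded_exceeds c Hunb) as Hex.
  destruct Hw as [_ [_ [_ [_ [Huncount Hcount]]]]].
  destruct (choice _ Hcount) as [enum Henum]. apply Huncount.
  exists (fun k => enum (c (fst (Cantor.of_nat k))) (snd (Cantor.of_nat k))).
  intro b. destruct (Hex b) as [n Hn]. destruct (Henum (c n) b Hn) as [m Hm].
  exists (Cantor.to_nat (n, m)). rewrite Cantor.cancel_of_to. exact Hm.
Qed.

Lemma bounded_on_initial_segment (F : O -> O) a :
  exists g, forall b, ole lt b a -> ole lt (F b) g.
Proof.
  destruct (initial_segment_countable a) as [e He].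
  destruct (countable_bounded (fun n => F (e n))) as [g Hg].
  exists g. intros b Hb. destruct (He b Hb) as [n <-]. apply Hg.
Qed.
End Omega1.

Definition bits_of (w : baire) : cantor := fun k => Nat.eqb (w k) 0.

Lemma bits_of_nonexpansive : nonexpansive bits_of.
Proof. intros n w w' Hag k Hk. unfold bits_of. rewrite (Hag k Hk). reflexivity. Qed.

Lemma bits_of_surjective (t : cantor) : exists w, bits_of w = t.
Proof.
  exists (fun k => if t k then 0%nat else 1%nat). apply functional_extensionality.
  intro k. unfold bits_of. destruct (t k); reflexivity.
Qed.

Section Boundedness.
Variables (O : Type) (lt : O -> O -> Prop) (B : cantor -> Prop) (rk : cantor -> O).
Hypothesis Hrank : pi11_rank lt B rk.
Variables (P : cantor -> Prop) (f : cantor -> cantor).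
Hypotheses (Hf : nonexpansive f) (Hf_inf : forall x, infset (f x))
           (Hred : forall x, P x <-> B (f x)).

(** If the ranks of the reduced points are dominated by ranks along a
    continuous family [Y] in [B], then [P] is analytic:
    [x ∈ P <-> exists w, f x <=_Sigma Y w]. *)
Lemma rank_dominated_analytic (Y : baire -> cantor) :
  nonexpansive Y -> (forall w, B (Y w)) ->
  (forall x, P x -> exists w, ole lt (rk (f x)) (rk (Y w))) -> analytic P.
Proof.
  intros HY HYB Hdom. destruct Hrank as [_ [leS [leP [HleS [_ Hcomp]]]]].
  apply (analytic_ext (fun x => exists w, leS (f x) (Y w))).
  - apply analytic_sigma11_preimage; assumption.
  - intro x. split.
    + intros [w Hw]. apply Hred.
      apply (proj2 (proj1 (Hcomp _ (HYB w) _ (Hf_inf x))) Hw).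
    + intros Hx. destruct (Hdom x Hx) as [w Hw]. exists w.
      apply (proj1 (Hcomp _ (HYB w) _ (Hf_inf x))). split; [apply Hred|]; assumption.
Qed.

Lemma rank_unbounded_analytic (g : cantor -> cantor) :
  is_omega1 O lt -> nonexpansive g -> (forall t, B (g t)) ->
  ~ (exists a, forall t, ole lt (rk (g t)) a) -> analytic P.
Proof.
  intros Hw Hg HgB Hunb.
  apply (rank_dominated_analytic (fun w => g (bits_of w))).
  - intros n w w' Hag. apply Hg, bits_of_nonexpansive, Hag.
  - intro w. apply HgB.
  - intros x _. destruct (unbounded_exceeds O lt Hw _ Hunb (rk (f x))) as [t Ht].
    destruct (bits_of_surjective t) as [w <-]. exists w. left. exact Ht.
Qed.

(** Boundedness principle: if the rank is bounded on the reduced points, then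
    [P] is analytic; the countably many ranks below the bound are realized by
    points [y_n] of [B], and [x ∈ P <-> exists n, f x <=_Sigma y_n]. *)
Lemma rank_bounded_analytic (bound : O) :
  is_omega1 O lt -> (forall x, P x -> ole lt (rk (f x)) bound) -> analytic P.
Proof.
  intros Hw Hbound. destruct (classic (exists x0, P x0)) as [[x0 Hx0]|Hempty].
  2:{ apply (analytic_ext (fun _ => False)); [exact analytic_empty|].
      intro x. split; [intros []|intro Hx; apply Hempty; exists x; exact Hx]. }
  destruct (initial_segment_countable O lt Hw bound) as [e He].
  assert (Hwit : forall n, exists y, B y /\ ((exists y', B y' /\ rk y' = e n) -> rk y = e n)).
  { intro n. destruct (classic (exists y', B y' /\ rk y' = e n)) as [[y' Hy']|Hno].
    - exists y'. split; [apply Hy'|intros _; apply Hy'].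
    - exists (f x0). split; [apply Hred, Hx0|intro H; contradiction]. }
  destruct (choice _ Hwit) as [y Hy].
  apply (rank_dominated_analytic (fun w => y (w 0%nat))).
  - intros [|n] w w' Hag k Hk; [lia|]. rewrite (Hag 0%nat) by lia. reflexivity.
  - intro w. apply Hy.
  - intros x Hx. destruct (He _ (Hbound x Hx)) as [n Hn]. exists (fun _ => n).
    right. rewrite <- Hn. symmetry. apply (proj2 (Hy n)).
    exists (f x). split; [apply Hred, Hx|exact (eq_sym Hn)].
Qed.
End Boundedness.

Theorem mainTheorem18 :
  forall (h : list bool -> nat) (s : nat -> list bool),
    admissible_enum h s ->
  forall A : cantor -> Prop,
    analytic A -> ~ is_borel A ->
  forall (O : Type) (lt : O -> O -> Prop),
    is_omega1 O lt ->
  forall phi psi : cantor -> O,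
    pi11_rank lt (Lf s A) phi ->
    pi11_rank lt (Lf0 s A) psi ->
    ~ exists Phi : O -> O,
        forall L, Lf0 s A L -> ole lt (psi L) (Phi (phi L)).
Proof.
  intros h s Hadm A HA HnB O lt Hw phi psi Hphi Hpsi [Phi HPhi].
  assert (HcoA : ~ analytic (fun x => ~ A x)) by (intro Hco; apply HnB, souslin; assumption).
  (* [phi] is bounded on the branches: fans reduce [~A] to [L^A_f]. *)
  assert (Hbound : exists a0, forall t, ole lt (phi (branch s t)) a0).
  { apply NNPP. intro Hunb. apply HcoA.
    apply (rank_unbounded_analytic O lt (Lf s A) phi Hphi _ (fan s) (fan_nonexpansive h s Hadm)
             (fan_infset h s Hadm) (fun sg => iff_sym (fan_in_Lf h s Hadm A sg)) (branch s) Hw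
             (branch_nonexpansive h s Hadm) (branch_in_Lf h s Hadm A) Hunb). }
  destruct Hbound as [a0 Ha0].
  destruct (bounded_on_initial_segment O lt Hw Phi a0) as [g Hg].
  (* Hence [psi] is bounded on the branches of points outside [A], which
     reduce [~A] to [L^A_{f,0}]. *)
  apply HcoA, (rank_bounded_analytic O lt (Lf0 s A) psi Hpsi _ (branch s)
                 (branch_nonexpansive h s Hadm) (branch_infset h s Hadm)
                 (fun sg => iff_sym (branch_in_Lf0 h s Hadm A sg)) g Hw).
  intros sg Hsg. apply (ole_trans O lt Hw _ (Phi (phi (branch s sg)))).
  - apply HPhi, (branch_in_Lf0 h s Hadm), Hsg.
  - apply Hg, Ha0.
Qed.
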